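(* Let $Q\in\mathbb{R}^{n\times n}$ be symmetric positive definite, $\mathcal{E}=\{x: x^TQx\le1\}$, $\partial\mathcal{E}=\{x:x^TQx=1\}$, and $A\in\mathbb{R}^{n\times n}$. Then for every $x_0\in\partial\mathcal{E}$ the solution $x(t)=e^{At}x_0$ of $\dot x=Ax$ satisfies $x(t)\in\partial\mathcal{E}$ for all $t\ge0$ if and only if $$\sum_{i=0}^{k-1}\frac{1}{(k-1)!}\binom{k-1}{i}(A^i)^TQA^{k-i-1}=0\quad\text{for all }k=2,3,\dots$$ *)

(* real matrices are needed together with the matrix exponential
   (an infinite series), so we use Stdlib Reals with explicit n x n matrices
   represented as functions on indices, only entries with indices < n matter. *)
From Stdlib Require Import Arith Reals Lra Lia.
Open Scope R_scope.

Definition mat := nat -> nat -> R.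
Definition vec := nat -> R.

Fixpoint rsum (n : nat) (f : nat -> R) : R :=
  match n with O => 0 | S m => rsum m f + f m end.

Definition mmul (n : nat) (A B : mat) : mat :=
  fun i j => rsum n (fun k => A i k * B k j).

Definition mid : mat := fun i j => if Nat.eqb i j then 1 else 0.

Fixpoint mpow (n : nat) (A : mat) (k : nat) : mat :=
  match k with O => mid | S k' => mmul n A (mpow n A k') end.

Definition mtr (A : mat) : mat := fun i j => A j i.

Definition mvec (n : nat) (A : mat) (x : vec) : vec :=
  fun i => rsum n (fun j => A i j * x j).

Definition qform (n : nat) (Q : mat) (x : vec) : R :=
  rsum n (fun i => x i * rsum n (fun j => Q i j * x j)).

Definition symmetric (n : nat) (Q : mat) : Prop :=
  forall i j, (i < n)%nat -> (j < n)%nat -> Q i j = Q j i.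

Definition posdef (n : nat) (Q : mat) : Prop :=
  forall x : vec, (exists i, (i < n)%nat /\ x i <> 0) -> 0 < qform n Q x.

Definition is_mexp (n : nat) (A : mat) (t : R) (E : mat) : Prop :=
  forall i j, (i < n)%nat -> (j < n)%nat ->
    infinite_sum (fun k => t ^ k / INR (fact k) * mpow n A k i j) (E i j).

Definition Mk (n : nat) (Q A : mat) (k : nat) : mat :=
  fun i j => rsum k (fun l =>
    / INR (fact (k - 1)) * C (k - 1) l *
    mmul n (mtr (mpow n A l)) (mmul n Q (mpow n A (k - l - 1))) i j).

(* Along x(t) = e^{At} x0 the function t |-> x(t)^T Q x(t) is the power series
   sum_m t^m x0^T M_{m+1} x0 (a Cauchy product of two exponential series, with M_1 = Q).
   Its coefficients are dominated by an exponential series, so it is constant on [0, 1]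
   exactly when all coefficients of index >= 1 vanish.  Scaling extends this from the
   ellipsoid's boundary to every x0, and polarization of the symmetric matrices M_k turns
   vanishing quadratic forms into vanishing matrices. *)

From Stdlib Require Import Reals Lra Lia Morphisms Setoid.
From Coquelicot Require Import Hierarchy Series PSeries ElemFct.
Open Scope R_scope.

Lemma rsum_ext n f g : (forall k, (k < n)%nat -> f k = g k) -> rsum n f = rsum n g.
Proof. induction n; simpl; intros H; auto. rewrite IHn, H; auto. Qed.

#[export] Instance rsum_proper n : Proper (pointwise_relation nat eq ==> eq) (rsum n).
Proof. intros f g H. apply rsum_ext. intros; apply H. Qed.

Lemma rsum_plus n f g : rsum n (fun k => f k + g k) = rsum n f + rsum n g.
Proof. induction n; simpl; [lra|]. rewrite IHn; lra. Qed.

Lemma rsum_mult_l n c f : c * rsum n f = rsum n (fun k => c * f k).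
Proof. induction n; simpl; [lra|]. rewrite <- IHn; lra. Qed.

Lemma rsum_mult_r n c f : rsum n f * c = rsum n (fun k => f k * c).
Proof. induction n; simpl; [lra|]. rewrite <- IHn; lra. Qed.

Lemma rsum_zero n f : (forall k, (k < n)%nat -> f k = 0) -> rsum n f = 0.
Proof. induction n; simpl; intros H; auto. rewrite IHn, H; auto; lra. Qed.

Lemma rsum_const n c : rsum n (fun _ => c) = INR n * c.
Proof. induction n; simpl rsum; [simpl; lra|]. rewrite IHn, S_INR. lra. Qed.

Lemma rsum_swap n m f :
  rsum n (fun i => rsum m (fun j => f i j)) = rsum m (fun j => rsum n (fun i => f i j)).
Proof.
  induction n; simpl.
  - symmetry; apply rsum_zero; auto.
  - rewrite IHn, <- rsum_plus. reflexivity.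
Qed.

Lemma rsum_le n f g : (forall k, (k < n)%nat -> f k <= g k) -> rsum n f <= rsum n g.
Proof.
  induction n; simpl; intros H; [lra|].
  assert (rsum n f <= rsum n g) by (apply IHn; intros; apply H; lia).
  specialize (H n ltac:(lia)). lra.
Qed.

Lemma rsum_nonneg n f : (forall k, (k < n)%nat -> 0 <= f k) -> 0 <= rsum n f.
Proof. intros H. rewrite <- (rsum_zero n (fun _ => 0)) by auto. apply rsum_le; auto. Qed.

Lemma rsum_ge_term n f i : (forall k, (k < n)%nat -> 0 <= f k) -> (i < n)%nat -> f i <= rsum n f.
Proof.
  induction n; simpl; intros H Hi; [lia|].
  assert (0 <= f n) by (apply H; lia).
  destruct (Nat.eq_dec i n) as [->|Hne].
  - pose proof (rsum_nonneg n f (fun k Hk => H k ltac:(lia))); lra.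
  - pose proof (IHn (fun k Hk => H k ltac:(lia)) ltac:(lia)); lra.
Qed.

Lemma Rabs_rsum_le n f : Rabs (rsum n f) <= rsum n (fun k => Rabs (f k)).
Proof.
  induction n; simpl; [rewrite Rabs_R0; lra|].
  eapply Rle_trans; [apply Rabs_triang|lra].
Qed.

Lemma rsum_shift n f : rsum (S n) f = f 0%nat + rsum n (fun k => f (S k)).
Proof. induction n; simpl in *; [lra|]. rewrite IHn; lra. Qed.

Lemma rsum_rev n f : rsum n f = rsum n (fun k => f (n - 1 - k)%nat).
Proof.
  induction n; [reflexivity|].
  rewrite (rsum_shift n (fun k => f (S n - 1 - k)%nat)).
  change (rsum (S n) f) with (rsum n f + f n). rewrite IHn.
  replace (S n - 1 - 0)%nat with n by lia.
  rewrite Rplus_comm. f_equal. apply rsum_ext. intros k _. f_equal. lia.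
Qed.

Lemma sum_f_R0_rsum f m : sum_f_R0 f m = rsum (S m) f.
Proof. induction m; simpl; [lra|]. rewrite IHm. reflexivity. Qed.

Lemma rsum_mid_l n a f : (a < n)%nat -> rsum n (fun b => mid a b * f b) = f a.
Proof.
  induction n; simpl; intros Ha; [lia|]. unfold mid at 2.
  destruct (Nat.eqb_spec a n) as [->|Hne].
  - rewrite rsum_zero; [lra|]. intros k Hk. unfold mid.
    destruct (Nat.eqb_spec n k); [lia|lra].
  - rewrite IHn by lia. lra.
Qed.

Lemma rsum_mid_r n a f : (a < n)%nat -> rsum n (fun b => f b * mid b a) = f a.
Proof.
  intros Ha. rewrite <- (rsum_mid_l n a f Ha). apply rsum_ext. intros k _. unfold mid.
  rewrite Nat.eqb_sym. ring.
Qed.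

Ltac distribute := repeat (setoid_rewrite rsum_mult_l || setoid_rewrite rsum_mult_r).

Definition bform (n : nat) (M : mat) (u w : vec) : R := rsum n (fun a => u a * mvec n M w a).

Definition mpowv (n : nat) (A : mat) (x : vec) (k : nat) : vec := mvec n (mpow n A k) x.

Lemma mvec_mmul n A B x a : mvec n (mmul n A B) x a = mvec n A (mvec n B x) a.
Proof.
  unfold mvec, mmul. distribute. rewrite rsum_swap.
  apply rsum_ext; intros; apply rsum_ext; intros; ring.
Qed.

Lemma mpowv_S n A x k a : mpowv n A x (S k) a = mvec n A (mpowv n A x k) a.
Proof. apply mvec_mmul. Qed.

Lemma mvec_scal n M c x a : mvec n M (fun b => c * x b) a = c * mvec n M x a.
Proof. unfold mvec. rewrite rsum_mult_l. apply rsum_ext; intros; ring. Qed.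

Lemma qform_bform n M x : qform n M x = bform n M x x.
Proof. reflexivity. Qed.

Lemma qform_scal n M x s : qform n M (fun i => s * x i) = s ^ 2 * qform n M x.
Proof.
  rewrite !qform_bform. unfold bform. rewrite rsum_mult_l. apply rsum_ext; intros i _.
  rewrite mvec_scal. ring.
Qed.

Lemma qform_plus n M u w :
  qform n M (fun k => u k + w k) = qform n M u + qform n M w + bform n M u w + bform n M w u.
Proof.
  rewrite !qform_bform. unfold bform. rewrite <- !rsum_plus. apply rsum_ext; intros a _.
  unfold mvec.
  rewrite (rsum_ext n (fun b => M a b * (u b + w b)) (fun b => M a b * u b + M a b * w b))
    by (intros; ring).
  rewrite rsum_plus. ring.
Qed.

Lemma bform_basis n M i j :
  (i < n)%nat -> (j < n)%nat -> bform n M (fun k => mid k i) (fun k => mid k j) = M i j.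
Proof.
  intros Hi Hj. unfold bform, mvec.
  rewrite <- (rsum_mid_l n i (fun a => M a j) Hi).
  apply rsum_ext; intros a _. rewrite rsum_mid_r by auto.
  unfold mid. rewrite Nat.eqb_sym. reflexivity.
Qed.

Lemma qform_zero_mat n M x :
  (forall i j, (i < n)%nat -> (j < n)%nat -> M i j = 0) -> qform n M x = 0.
Proof.
  intros H. apply rsum_zero; intros i Hi.
  rewrite rsum_zero; [ring|]. intros j Hj. rewrite H by auto. ring.
Qed.

Lemma qform_zero_vec n M x : (forall i, (i < n)%nat -> x i = 0) -> qform n M x = 0.
Proof. intros H. apply rsum_zero; intros i Hi. rewrite H by auto. ring. Qed.

Lemma polarization n M : symmetric n M -> (forall x, qform n M x = 0) ->
  forall i j, (i < n)%nat -> (j < n)%nat -> M i j = 0.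
Proof.
  intros Hs Hq i j Hi Hj.
  pose proof (qform_plus n M (fun k => mid k i) (fun k => mid k j)) as E.
  rewrite !Hq, !bform_basis, (Hs j i) in E by auto. lra.
Qed.

(* Rescale x onto the ellipsoid; if qform Q x <= 0 then x = 0 by definiteness. *)
Lemma qform_vanish_of_sphere n Q M : posdef n Q ->
  (forall x, qform n Q x = 1 -> qform n M x = 0) -> forall x, qform n M x = 0.
Proof.
  intros Hpd H x. destruct (Rlt_dec 0 (qform n Q x)) as [Hp|Hnp].
  - set (s := / sqrt (qform n Q x)).
    assert (Hs : s ^ 2 * qform n Q x = 1).
    { unfold s. rewrite <- (pow2_sqrt (qform n Q x)) at 2 by lra.
      field. apply Rgt_not_eq, sqrt_lt_R0, Hp. }
    pose proof (H (fun i => s * x i) ltac:(rewrite qform_scal; exact Hs)) as Z.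
    rewrite qform_scal in Z.
    destruct (Rmult_integral _ _ Z) as [Hz|]; [rewrite Hz in Hs; lra|auto].
  - apply qform_zero_vec. intros i Hi.
    destruct (Req_dec (x i) 0) as [|Hne]; auto.
    exfalso. apply Hnp, Hpd. eauto.
Qed.

Lemma qform_mmul_mpow n Q A x l r :
  qform n (mmul n (mtr (mpow n A l)) (mmul n Q (mpow n A r))) x
  = bform n Q (mpowv n A x l) (mpowv n A x r).
Proof.
  unfold qform, bform, mpowv, mvec, mmul, mtr. distribute.
  transitivity (rsum n (fun i => rsum n (fun p => rsum n (fun j => rsum n (fun q =>
    x i * (mpow n A l p i * (Q p q * mpow n A r q j)) * x j))))).
  { apply rsum_ext; intros. rewrite rsum_swap. apply rsum_ext; intros.
    apply rsum_ext; intros. apply rsum_ext; intros. ring. }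
  rewrite rsum_swap. apply rsum_ext; intros p _.
  transitivity (rsum n (fun i => rsum n (fun q => rsum n (fun j =>
    x i * (mpow n A l p i * (Q p q * mpow n A r q j)) * x j)))).
  { apply rsum_ext; intros. apply rsum_swap. }
  rewrite rsum_swap. apply rsum_ext; intros q _. rewrite rsum_swap.
  apply rsum_ext; intros; apply rsum_ext; intros; ring.
Qed.

Lemma qform_rsum n K (c : nat -> R) (M : nat -> mat) x :
  qform n (fun i j => rsum K (fun l => c l * M l i j)) x = rsum K (fun l => c l * qform n (M l) x).
Proof.
  unfold qform. distribute.
  transitivity (rsum n (fun i => rsum K (fun l => rsum n (fun j => x i * (c l * M l i j * x j))))).
  { apply rsum_ext; intros. apply rsum_swap. }
  rewrite rsum_swap. apply rsum_ext; intros l _. apply rsum_ext; intros i _.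
  apply rsum_ext; intros j _. ring.
Qed.

Lemma qform_Mk n Q A x m :
  qform n (Mk n Q A (S m)) x =
  rsum (S m) (fun l => / INR (Factorial.fact m) * C m l * bform n Q (mpowv n A x l) (mpowv n A x (m - l))).
Proof.
  transitivity (qform n (fun i j => rsum (S m) (fun l => / INR (Factorial.fact m) * C m l *
    mmul n (mtr (mpow n A l)) (mmul n Q (mpow n A (m - l))) i j)) x).
  - unfold Mk. replace (S m - 1)%nat with m by lia.
    unfold qform, mvec. apply rsum_ext; intros i _. f_equal. apply rsum_ext; intros j _. f_equal.
    apply rsum_ext; intros l _. do 4 f_equal. lia.
  - rewrite qform_rsum. apply rsum_ext; intros l _. rewrite qform_mmul_mpow. reflexivity.
Qed.

Lemma qform_Mk_1 n Q A x : qform n (Mk n Q A 1) x = qform n Q x.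
Proof.
  rewrite qform_Mk. simpl rsum. unfold C. simpl Factorial.fact. simpl INR.
  replace (/ 1 * (1 / (1 * 1))) with 1 by field. rewrite Rplus_0_l, Rmult_1_l.
  unfold bform, qform, mpowv. simpl mpow.
  apply rsum_ext; intros a Ha. unfold mvec at 1 3. rewrite rsum_mid_l by auto.
  f_equal. apply rsum_ext; intros b Hb. unfold mvec. rewrite rsum_mid_l by auto. reflexivity.
Qed.

Lemma Mk_sym n Q A k i j : symmetric n Q -> Mk n Q A k i j = Mk n Q A k j i.
Proof.
  intros HQ. unfold Mk. rewrite (rsum_rev k). apply rsum_ext; intros l Hl.
  replace (k - (k - 1 - l) - 1)%nat with l by lia.
  rewrite <- pascal_step1 by lia.
  replace (k - 1 - l)%nat with (k - l - 1)%nat by lia. f_equal.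
  unfold mmul, mtr. distribute. rewrite rsum_swap. apply rsum_ext; intros p Hp.
  apply rsum_ext; intros q Hq. rewrite (HQ q p) by auto. ring.
Qed.

Definition mabs (n : nat) (M : mat) : R := rsum n (fun i => rsum n (fun j => Rabs (M i j))).
Definition vabs (n : nat) (x : vec) : R := rsum n (fun j => Rabs (x j)).

Lemma Rabs_le_vabs n x b : (b < n)%nat -> Rabs (x b) <= vabs n x.
Proof. intros Hb. apply (rsum_ge_term n (fun j => Rabs (x j))); auto. intros; apply Rabs_pos. Qed.

Lemma Rabs_mvec_le n M x a K : (a < n)%nat -> (forall b, (b < n)%nat -> Rabs (x b) <= K) ->
  Rabs (mvec n M x a) <= mabs n M * K.
Proof.
  intros Ha Hx. assert (HK : 0 <= K) by (eapply Rle_trans; [apply Rabs_pos|apply (Hx a Ha)]).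
  eapply Rle_trans; [apply Rabs_rsum_le|].
  apply Rle_trans with (rsum n (fun b => Rabs (M a b)) * K).
  - rewrite rsum_mult_r. apply rsum_le; intros b Hb. rewrite Rabs_mult.
    apply Rmult_le_compat_l; [apply Rabs_pos|auto].
  - apply Rmult_le_compat_r; auto.
    apply (rsum_ge_term n (fun i => rsum n (fun j => Rabs (M i j)))); auto.
    intros; apply rsum_nonneg; intros; apply Rabs_pos.
Qed.

Lemma mpow_entry_le n A k a b : (a < n)%nat -> Rabs (mpow n A k a b) <= mabs n A ^ k.
Proof.
  revert a. induction k as [|k IH]; intros a Ha; simpl.
  - unfold mid. destruct (Nat.eqb a b); rewrite ?Rabs_R1, ?Rabs_R0; lra.
  - change (mmul n A (mpow n A k) a b) with (mvec n A (fun l => mpow n A k l b) a).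
    apply Rabs_mvec_le; auto.
Qed.

Lemma mpowv_le n A x k a : (a < n)%nat -> Rabs (mpowv n A x k a) <= vabs n x * mabs n A ^ k.
Proof.
  revert a. induction k as [|k IH]; intros a Ha.
  - unfold mpowv, mvec. simpl mpow. rewrite rsum_mid_l by auto.
    rewrite Rmult_1_r. apply Rabs_le_vabs; auto.
  - rewrite mpowv_S. eapply Rle_trans; [apply Rabs_mvec_le; eauto|]. simpl. right; ring.
Qed.

Lemma Rabs_bform_le n M u w Ku Kw :
  (forall a, (a < n)%nat -> Rabs (u a) <= Ku) ->
  (forall a, (a < n)%nat -> Rabs (mvec n M w a) <= Kw) ->
  Rabs (bform n M u w) <= INR n * (Ku * Kw).
Proof.
  intros Hu Hw. eapply Rle_trans; [apply Rabs_rsum_le|]. rewrite <- rsum_const.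
  apply rsum_le; intros a Ha. rewrite Rabs_mult.
  apply Rmult_le_compat; auto using Rabs_pos.
Qed.

Lemma sum_binomial m : rsum (S m) (fun l => C m l) = 2 ^ m.
Proof.
  replace 2 with (1 + 1) by ring. rewrite binomial, sum_f_R0_rsum.
  apply rsum_ext; intros. rewrite !pow1. ring.
Qed.

Lemma C_nonneg m l : 0 <= C m l.
Proof.
  unfold C. apply Rle_mult_inv_pos; [apply pos_INR|].
  apply Rmult_lt_0_compat; apply INR_fact_lt_0.
Qed.

Lemma Rabs_qform_Mk_le n Q A x m :
  Rabs (qform n (Mk n Q A (S m)) x) <=
  INR n * (vabs n x * (mabs n Q * vabs n x)) * (/ INR (Factorial.fact m) * (2 * mabs n A) ^ m).
Proof.
  set (K := INR n * (vabs n x * (mabs n Q * vabs n x))).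
  set (c := mabs n A).
  assert (Hf : 0 < / INR (Factorial.fact m)) by apply Rinv_0_lt_compat, INR_fact_lt_0.
  rewrite qform_Mk. eapply Rle_trans; [apply Rabs_rsum_le|].
  apply Rle_trans with (rsum (S m) (fun l => C m l * (/ INR (Factorial.fact m) * K * c ^ m))).
  - apply rsum_le; intros l Hl.
    assert (Hb : Rabs (bform n Q (mpowv n A x l) (mpowv n A x (m - l)))
                 <= INR n * (vabs n x * c ^ l * (mabs n Q * (vabs n x * c ^ (m - l))))).
    { apply Rabs_bform_le; intros a Ha; [apply mpowv_le; auto|].
      apply Rabs_mvec_le; auto. intros; apply mpowv_le; auto. }
    rewrite !Rabs_mult, Rabs_pos_eq, (Rabs_pos_eq (C m l)) by (auto using C_nonneg; lra).
    replace (c ^ m) with (c ^ l * c ^ (m - l)) by (rewrite <- pow_add; f_equal; lia).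
    apply Rle_trans with (/ INR (Factorial.fact m) * C m l
                          * (INR n * (vabs n x * c ^ l * (mabs n Q * (vabs n x * c ^ (m - l)))))).
    + apply Rmult_le_compat_l; auto. apply Rmult_le_pos; [lra|apply C_nonneg].
    + unfold K. right; ring.
  - rewrite <- rsum_mult_r, sum_binomial, Rpow_mult_distr. right; ring.
Qed.

Lemma is_series_zero : is_series (fun _ : nat => 0) 0.
Proof.
  pose proof (is_series_scal_r 0 _ _ (is_series_geom 0 ltac:(rewrite Rabs_R0; lra))) as H.
  rewrite Rmult_0_r in H. eapply is_series_ext; [|exact H]. intros; simpl; ring.
Qed.

Lemma is_series_rsum n (f : nat -> nat -> R) (l : nat -> R) :
  (forall b, (b < n)%nat -> is_series (f b) (l b)) ->
  is_series (fun k => rsum n (fun b => f b k)) (rsum n l).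
Proof.
  induction n; simpl; intros H.
  - apply is_series_zero.
  - apply (is_series_plus (fun k => rsum n (fun b => f b k)) (f n)); auto.
Qed.

Lemma is_series_mvec n M (u : nat -> vec) (U : vec) a :
  (forall b, (b < n)%nat -> is_series (fun k => u k b) (U b)) ->
  is_series (fun k => mvec n M (u k) a) (mvec n M U a).
Proof.
  intros H. unfold mvec.
  rewrite (rsum_ext n (fun b => M a b * U b) (fun b => U b * M a b)) by (intros; ring).
  eapply is_series_ext; [|apply (is_series_rsum n (fun b k => u k b * M a b))].
  - intros k. apply rsum_ext; intros; ring.
  - intros b Hb. apply is_series_scal_r, H, Hb.
Qed.

Lemma ex_series_exp_scaled K z : ex_series (fun k => K * (/ INR (Factorial.fact k) * z ^ k)).
Proof.
  apply (ex_series_scal_l K (fun k => / INR (Factorial.fact k) * z ^ k)).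
  exists (exp z). apply is_pseries_R, is_exp_Reals.
Qed.

Lemma ex_series_exp_majorant (f : nat -> R) t K c : (forall k, Rabs (f k) <= K * c ^ k) ->
  ex_series (fun k => Rabs (t ^ k / INR (Factorial.fact k) * f k)).
Proof.
  intros Hf.
  apply (@ex_series_le R_AbsRing R_CompleteNormedModule _
           (fun k => K * (/ INR (Factorial.fact k) * (Rabs t * c) ^ k))).
  - intros k. change (norm (Rabs (t ^ k / INR (Factorial.fact k) * f k)))
                with (Rabs (Rabs (t ^ k / INR (Factorial.fact k) * f k))).
    assert (0 < / INR (Factorial.fact k)) by apply Rinv_0_lt_compat, INR_fact_lt_0.
    assert (0 <= Rabs t ^ k) by apply pow_le, Rabs_pos.
    rewrite Rabs_Rabsolu. unfold Rdiv. rewrite !Rabs_mult, <- RPow_abs, Rabs_inv.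
    rewrite (Rabs_pos_eq (INR _)) by apply pos_INR. rewrite Rpow_mult_distr.
    apply Rle_trans with (Rabs t ^ k * / INR (Factorial.fact k) * (K * c ^ k)).
    + apply Rmult_le_compat_l; auto. apply Rmult_le_pos; lra.
    + right; ring.
  - apply ex_series_exp_scaled.
Qed.

Lemma mexp_exists n A t : exists E, is_mexp n A t E.
Proof.
  exists (fun i j => Series (fun k => t ^ k / INR (Factorial.fact k) * mpow n A k i j)).
  intros i j Hi Hj. apply is_series_Reals, Series_correct, ex_series_Rabs.
  apply (ex_series_exp_majorant _ t 1 (mabs n A)). intros k.
  rewrite Rmult_1_l. apply mpow_entry_le; auto.
Qed.

Lemma is_series_mexp_mpowv n A t E x a : is_mexp n A t E -> (a < n)%nat ->
  is_series (fun k => t ^ k / INR (Factorial.fact k) * mpowv n A x k a) (mvec n E x a).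
Proof.
  intros HE Ha.
  eapply is_series_ext;
    [|apply (is_series_rsum n (fun b k => t ^ k / INR (Factorial.fact k) * mpow n A k a b * x b))].
  - intros k. unfold mpowv, mvec. rewrite rsum_mult_l. apply rsum_ext; intros; ring.
  - intros b Hb. apply is_series_scal_r, is_series_Reals, HE; auto.
Qed.

Lemma binomial_coef_split t m l : (l <= m)%nat ->
  t ^ m * (/ INR (Factorial.fact m) * C m l)
  = t ^ l / INR (Factorial.fact l) * (t ^ (m - l) / INR (Factorial.fact (m - l))).
Proof.
  intros Hl. replace (t ^ m) with (t ^ l * t ^ (m - l)) by (rewrite <- pow_add; f_equal; lia).
  unfold C. field. repeat split; apply INR_fact_neq_0.
Qed.

(* Cauchy product of the series of e^{At} x0 and of Q e^{At} x0, taken entrywise. *)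
Lemma is_series_qform_mexp n Q A x t E : is_mexp n A t E ->
  is_series (fun m => t ^ m * qform n (Mk n Q A (S m)) x) (qform n Q (mvec n E x)).
Proof.
  intros HE.
  set (u k := fun a => t ^ k / INR (Factorial.fact k) * mpowv n A x k a).
  set (c := mabs n A).
  assert (Hu : forall a, (a < n)%nat -> is_series (fun k => u k a) (mvec n E x a))
    by (intros; apply is_series_mexp_mpowv; auto).
  assert (Hw : forall a, (a < n)%nat ->
                 is_series (fun k => mvec n Q (u k) a) (mvec n Q (mvec n E x) a))
    by (intros; apply is_series_mvec; auto).
  assert (Au : forall a, (a < n)%nat -> ex_series (fun k => Rabs (u k a))).
  { intros a Ha. apply (ex_series_exp_majorant _ t (vabs n x) c). intros; apply mpowv_le; auto. }
  assert (Aw : forall a, (a < n)%nat -> ex_series (fun k => Rabs (mvec n Q (u k) a))).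
  { intros a Ha. eapply ex_series_ext;
      [|apply (ex_series_exp_majorant (fun k => mvec n Q (mpowv n A x k) a) t (mabs n Q * vabs n x) c)].
    - intros k. unfold u. rewrite mvec_scal. reflexivity.
    - intros k. rewrite Rmult_assoc. apply Rabs_mvec_le; auto. intros; apply mpowv_le; auto. }
  eapply is_series_ext; [|apply (is_series_rsum n (fun a m =>
    sum_f_R0 (fun l => u l a * mvec n Q (u (m - l)%nat) a) m)
    (fun a => mvec n E x a * mvec n Q (mvec n E x) a))].
  2: { intros a Ha. apply (is_series_mult (fun k => u k a) (fun k => mvec n Q (u k) a)); auto. }
  intros m. rewrite qform_Mk, rsum_mult_l.
  setoid_rewrite sum_f_R0_rsum. rewrite rsum_swap. apply rsum_ext; intros l Hl.
  rewrite <- Rmult_assoc, binomial_coef_split by lia.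
  unfold bform. rewrite rsum_mult_l. apply rsum_ext; intros a _.
  unfold u. rewrite mvec_scal. ring.
Qed.

Lemma is_series_first_term (a : nat -> R) : (forall k, a (S k) = 0) -> is_series a (a 0%nat).
Proof.
  intros H. apply is_series_decr_1.
  change (is_series (fun k => a (S k)) (a 0%nat + - a 0%nat)). rewrite Rplus_opp_r.
  eapply is_series_ext; [|apply is_series_zero]. intros k. rewrite H. reflexivity.
Qed.

Lemma is_series_drop_zeros (a : nat -> R) m l :
  (forall k, (k < m)%nat -> a k = 0) -> is_series a l -> is_series (fun k => a (m + k)%nat) l.
Proof.
  intros Hz H. destruct m as [|m]; [exact H|].
  apply is_series_incr_n; [lia|].
  rewrite sum_n_Reals, sum_f_R0_rsum, rsum_zero by auto.
  change (plus l 0) with (l + 0). rewrite Rplus_0_r. exact H.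
Qed.

Lemma pow_le_one t k : 0 <= t <= 1 -> t ^ k <= 1.
Proof.
  intros Ht. induction k; simpl; [lra|].
  pose proof (pow_le t k ltac:(lra)).
  apply Rle_trans with (1 * 1); [apply Rmult_le_compat|]; lra.
Qed.

(* If sum_k t^k f k = 0 then f 0 = - t * sum_k t^k f (k+1), whose size is O(t). *)
Lemma Rabs_leading_coef_le (f b : nat -> R) t : 0 < t <= 1 ->
  (forall k, Rabs (f k) <= b k) -> ex_series b ->
  is_series (fun k => t ^ k * f k) 0 -> Rabs (f 0%nat) <= t * Series (fun k => b (S k)).
Proof.
  intros Ht Hb Eb H.
  assert (Hterm : forall k, Rabs (t ^ k * f (S k)) <= b (S k)).
  { intros k. rewrite Rabs_mult, Rabs_pos_eq by (apply pow_le; lra).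
    rewrite <- (Rmult_1_l (b (S k))).
    apply Rmult_le_compat; auto using Rabs_pos.
    - apply pow_le; lra.
    - apply pow_le_one; lra. }
  assert (Eb1 : ex_series (fun k => b (S k))) by (apply (ex_series_incr_1 b), Eb).
  assert (Etail : ex_series (fun k => Rabs (t ^ k * f (S k)))).
  { apply (@ex_series_le R_AbsRing R_CompleteNormedModule _ (fun k => b (S k))); [|exact Eb1].
    intros k.
    change (norm (Rabs (t ^ k * f (S k)))) with (Rabs (Rabs (t ^ k * f (S k)))).
    rewrite Rabs_Rabsolu. apply Hterm. }
  assert (Htail : is_series (fun k => t ^ k * f (S k)) (- f 0%nat / t)).
  { assert (H0 : is_series (fun k => t ^ k * f k) (plus (- f 0%nat) (t ^ 0 * f 0%nat))).
    { change (plus (- f 0%nat) (t ^ 0 * f 0%nat)) with (- f 0%nat + t ^ 0 * f 0%nat).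
      replace (- f 0%nat + t ^ 0 * f 0%nat) with 0 by (simpl; ring). exact H. }
    apply (is_series_incr_1 (fun k => t ^ k * f k)), (is_series_scal_r (/ t)) in H0.
    eapply is_series_ext; [|exact H0]. intros k. simpl. field. lra. }
  pose proof (Series_Rabs _ Etail) as Habs. rewrite (is_series_unique _ _ Htail) in Habs.
  assert (Hle : Series (fun k => Rabs (t ^ k * f (S k))) <= Series (fun k => b (S k))).
  { apply Series_le; auto. intros k. split; auto using Rabs_pos. }
  unfold Rdiv in Habs. rewrite Rabs_mult, Rabs_Ropp, Rabs_inv, (Rabs_pos_eq t) in Habs by lra.
  replace (Rabs (f 0%nat)) with (t * (Rabs (f 0%nat) * / t)) by (field; lra).
  apply Rmult_le_compat_l; lra.
Qed.

Lemma Rabs_le_mult_small x S : (forall t, 0 < t <= 1 -> Rabs x <= t * S) -> x = 0.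
Proof.
  intros H. destruct (Req_dec x 0) as [|Hx]; auto. exfalso.
  pose proof (Rabs_pos_lt x Hx) as Hpos.
  pose proof (H 1 ltac:(lra)) as H1.
  pose proof (H (Rabs x / (2 * S))) as H2.
  assert (Rabs x / (2 * S) * S = Rabs x / 2) by (field; lra).
  assert (Rabs x / (2 * S) <= 1 / 2) by (apply Rmult_le_reg_r with (2 * S); [lra|]; field_simplify; lra).
  assert (0 < Rabs x / (2 * S)) by (apply Rdiv_lt_0_compat; lra).
  specialize (H2 ltac:(lra)). lra.
Qed.

Lemma power_series_vanishing (e b : nat -> R) :
  (forall k, Rabs (e k) <= b k) -> ex_series b ->
  (forall t, 0 < t <= 1 -> is_series (fun k => t ^ k * e k) 0) -> forall m, e m = 0.
Proof.
  intros Hb Eb He m. induction m as [m IH] using Wf_nat.lt_wf_ind.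
  apply (Rabs_le_mult_small _ (Series (fun k => b (m + S k)%nat))). intros t Ht.
  rewrite <- (Nat.add_0_r m) at 1.
  apply (Rabs_leading_coef_le (fun k => e (m + k)%nat) (fun k => b (m + k)%nat) t Ht).
  - intros; apply Hb.
  - apply ex_series_incr_n, Eb.
  - specialize (He t Ht). apply (is_series_drop_zeros _ m) in He; [|intros k Hk; rewrite IH by lia; ring].
    apply (is_series_scal_r (/ t ^ m)) in He. rewrite Rmult_0_l in He.
    eapply is_series_ext; [|exact He]. intros k. simpl. rewrite pow_add.
    field. apply pow_nonzero. lra.
Qed.

Lemma power_series_const (d b : nat -> R) :
  (forall k, Rabs (d k) <= b k) -> ex_series b ->
  (forall t, 0 < t <= 1 -> is_series (fun k => t ^ k * d k) (d 0%nat)) -> forall m, d (S m) = 0.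
Proof.
  intros Hb Eb Hd.
  apply (power_series_vanishing (fun k => d (S k)) (fun k => b (S k))); auto.
  - apply (ex_series_incr_1 b), Eb.
  - intros t Ht. specialize (Hd t Ht).
    replace (d 0%nat) with (plus 0 (t ^ 0 * d 0%nat)) in Hd
      by (change (0 + t ^ 0 * d 0%nat = d 0%nat); simpl; ring).
    apply (is_series_incr_1 (fun k => t ^ k * d k)), (is_series_scal_r (/ t)) in Hd. rewrite Rmult_0_l in Hd.
    eapply is_series_ext; [|exact Hd]. intros k. simpl. field. lra.
Qed.

Theorem proposition3p14 (n : nat) (Q A : mat) :
  symmetric n Q -> posdef n Q ->
  ((forall x0 : vec, qform n Q x0 = 1 ->
      forall (t : R) (E : mat), 0 <= t -> is_mexp n A t E ->
        qform n Q (mvec n E x0) = 1)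
   <->
   (forall k : nat, (2 <= k)%nat ->
      forall i j, (i < n)%nat -> (j < n)%nat -> Mk n Q A k i j = 0)).
Proof.
  intros HQ Hpd. split.
  - intros Hinv k Hk i j Hi Hj. destruct k as [|[|m]]; [lia|lia|].
    apply (polarization n); auto. { intros a b _ _. apply Mk_sym, HQ. }
    apply (qform_vanish_of_sphere n Q); auto. intros x Hx.
    apply (power_series_const (fun m => qform n (Mk n Q A (S m)) x)
             (fun m => INR n * (vabs n x * (mabs n Q * vabs n x))
                       * (/ INR (Factorial.fact m) * (2 * mabs n A) ^ m))).
    + intros; apply Rabs_qform_Mk_le.
    + apply ex_series_exp_scaled.
    + intros t Ht. destruct (mexp_exists n A t) as [E HE].
      pose proof (is_series_qform_mexp n Q A x t E HE) as Hs.
      rewrite (Hinv x Hx t E ltac:(lra) HE) in Hs. rewrite qform_Mk_1, Hx. exact Hs.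
  - intros HM x Hx t E _ HE.
    rewrite <- (is_series_unique _ _ (is_series_qform_mexp n Q A x t E HE)).
    assert (Htail : forall k, t ^ S k * qform n (Mk n Q A (S (S k))) x = 0).
    { intros k. rewrite qform_zero_mat; [ring|]. intros; apply HM; auto. lia. }
    rewrite (is_series_unique _ _ (is_series_first_term _ Htail)).
    simpl. rewrite Rmult_1_l, qform_Mk_1. exact Hx.
Qed.
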